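(* Let $\mathbb{F}_q$ be a finite field, $n\ge1$, and $C\le\mathbb{F}_q^n$ a linear code. Suppose there exists a regular subgroup $G$ of $S_n$ having a coprime cyclic decomposition and such that $\langle G, C_{S_n}(G)\rangle\le\mathrm{PAut}(C)$. Then $C$ is a cyclic group code.
   Context: $\mathcal{B}=\{e_1,\dots,e_n\}$ is the standard basis of $\mathbb{F}_q^n$; $\sigma\in S_n$ acts by $\sigma(\sum a_ie_i)=\sum a_ie_{\sigma(i)}$ and $\mathrm{PAut}(C)=\{\sigma\in S_n:\sigma(C)=C\}$. A subgroup of $S_n$ is regular if it has order $n$ and acts transitively on $\{1,\dots,n\}$; $C_{S_n}(G)$ is the centralizer of $G$ in $S_n$. A finite group $G$ has a coprime cyclic decomposition if there exist cyclic subgroups $A,B\le G$ with $\gcd(|A|,|B|)=1$ and $G=AB=\{ab:a\in A,b\in B\}$. For a finite group $H$ of order $n$, $C$ is an $H$-code if there is a bijection $\phi:\mathcal{B}\to H$ whose $\mathbb{F}_q$-linear extension $\tilde\phi:\mathbb{F}_q^n\to\mathbb{F}_q[H]$ maps $C$ onto a two-sided ideal of $\mathbb{F}_q[H]$; $C$ is a cyclic group code if it is an $H$-code for some cyclic group $H$. *)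

From HB Require Import structures.
From mathcomp Require Import all_boot all_order all_algebra all_fingroup all_solvable all_field.
Set Implicit Arguments. Unset Strict Implicit. Unset Printing Implicit Defensive.
Import GRing.Theory.
Local Open Scope ring_scope.
Local Open Scope group_scope.

(* Coordinate permutation action: s (sum a_i e_i) = sum a_i e_(s i),
   i.e. (s v)_j = v_(s^-1 j). *)
Definition permv (F : fieldType) (n : nat) (s : 'S_n) (v : 'rV[F]_n) : 'rV[F]_n :=
  \row_j v 0 ((s^-1)%g j).

Definition PAut (F : finFieldType) (n : nat) (C : {vspace 'rV[F]_n}) : {set 'S_n} :=
  [set s : 'S_n | [forall v : 'rV[F]_n,
      (v \in C) == [exists w : 'rV[F]_n, (w \in C) && (permv s w == v)]]].

Definition regular_subgroup (n : nat) (G : {group 'S_n}) : Prop :=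
  #|G| = n /\ [transitive G, on [set: 'I_n] | 'P].

Definition coprime_cyclic_decomposition (gT : finGroupType) (G : {group gT}) : Prop :=
  exists (A B : {group gT}), [/\ (A \subset G) && (B \subset G), cyclic A, cyclic B,
     coprime #|A| #|B| & ((A * B)%g = G :> {set gT})].

(* Group algebra F[H], for H the whole finite group gT: functions gT -> F
   with convolution product. *)
Definition galg_mul (F : fieldType) (gT : finGroupType) (a b : {ffun gT -> F})
  : {ffun gT -> F} :=
  [ffun g => \sum_(x : gT) a x * b (x^-1 * g)%g].

Definition two_sided_ideal (F : fieldType) (gT : finGroupType)
  (I : {ffun gT -> F} -> Prop) : Prop :=
  [/\ I 0, (forall a b, I a -> I b -> I (a - b)),
      (forall r a, I a -> I (galg_mul r a)) &
      (forall r a, I a -> I (galg_mul a r))].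

(* C is an H-code (H = the group gT): there is a bijection phi from the
   basis {e_i} (indexed by 'I_n) to H whose linear extension maps C onto a
   two-sided ideal of F[H].  The linear extension sends v = sum v_i e_i to
   sum v_i phi(i), i.e. to the function h |-> v_(phi^-1 h). *)
Definition group_code (F : finFieldType) (n : nat) (C : {vspace 'rV[F]_n})
  (gT : finGroupType) : Prop :=
  #|gT| = n /\
  exists phi : 'I_n -> gT, bijective phi /\
    two_sided_ideal (fun f : {ffun gT -> F} =>
      exists2 v : 'rV[F]_n, v \in C & forall i, f (phi i) = v 0 i).

Definition cyclic_group_code (F : finFieldType) (n : nat) (C : {vspace 'rV[F]_n})
  : Prop :=
  exists gT : finGroupType, cyclic [set: gT] /\ group_code C gT.

(* Identify the points with the regular group G through g |-> g o.  Left
   translations then centralise G.  If G = <a><b> with coprime orders and c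
   is the left translation by b, then c commutes with a and has the order of
   b, so <a c> = <a><c>, which is transitive since <a><b> = G.  Finally, a
   transitive cyclic (hence regular) subgroup K of PAut(C) identifies the
   coordinates with K, turning C into a K-submodule of F[K], that is, an
   ideal of this commutative group algebra. *)

From HB Require Import structures.
From mathcomp Require Import all_boot all_order all_algebra all_fingroup all_solvable all_field.
Set Implicit Arguments. Unset Strict Implicit. Unset Printing Implicit Defensive.
Import GRing.Theory.
Local Open Scope ring_scope.
Local Open Scope group_scope.

Lemma galg_mulC (F : fieldType) (gT : finGroupType) (a b : {ffun gT -> F}) :
  abelian [set: gT] -> galg_mul a b = galg_mul b a.
Proof.
move=> abT; apply/ffunP => g; rewrite !ffunE.
rewrite (reindex_inj (inj_comp (mulgI g) invg_inj)) /=; apply: eq_bigr => y _.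
have cgy : commute g y^-1 by apply: (centsP abT); rewrite inE.
by rewrite invMg invgK -mulgA mulVg mulg1 -cgy mulrC.
Qed.

Lemma abelian_two_sided_ideal (F : fieldType) (gT : finGroupType)
    (I : {ffun gT -> F} -> Prop) :
  abelian [set: gT] -> I 0%R -> (forall a b, I a -> I b -> I (a - b)%R) ->
  (forall r a, I a -> I (galg_mul r a)) -> two_sided_ideal I.
Proof. by move=> abT I0 IB IM; split=> // r a /(IM r); rewrite galg_mulC. Qed.

Lemma permv_PAut (F : finFieldType) n (C : {vspace 'rV[F]_n}) s v :
  s \in PAut C -> v \in C -> permv s v \in C.
Proof.
rewrite inE => /forallP/(_ (permv s v))/eqP -> vC.
by apply/existsP; exists v; rewrite vC eqxx.
Qed.

Lemma regular_subgroup_inj n (G : {group 'S_n}) o :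
  regular_subgroup G -> {in G &, injective (fun g : 'S_n => g o)}.
Proof.
case=> cardG trG; apply/imset_injP.
have -> : [set g o | g : 'S_n in G] = orbit 'P G o by [].
by rewrite (atransP trG) ?inE // cardsT card_ord cardG.
Qed.

Lemma atrans_abelian_inj n (K : {group 'S_n}) o :
  abelian K -> [transitive K, on [set: 'I_n] | 'P] ->
  {in K &, injective (fun g : 'S_n => g o)}.
Proof.
move=> abK trK x y xK yK /= exy; apply/permP => j.
have /orbitP[z zK <-] : j \in orbit 'P K o by rewrite (atransP trK) ?inE.
rewrite [_ = _]/= apermE -!permM.
by rewrite -(centsP abK _ xK _ zK) -(centsP abK _ yK _ zK) !permM exy.
Qed.

Section RegularAction.

Variables (n : nat) (G : {group 'S_n}) (o : 'I_n).

Definition pt_elt (j : 'I_n) : 'S_n := odflt 1 [pick g in G | g o == j].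

Hypothesis trG : [transitive G, on [set: 'I_n] | 'P].
Hypothesis injG : {in G &, injective (fun g : 'S_n => g o)}.

Lemma pt_eltP j : pt_elt j \in G /\ pt_elt j o = j.
Proof.
rewrite /pt_elt; case: pickP => [g /andP[gG /eqP] // | noG].
have /orbitP[g gG gj] : j \in orbit 'P G o by rewrite (atransP trG) ?inE.
by have := noG g; rewrite gG -gj eqxx.
Qed.

Lemma pt_elt_in j : pt_elt j \in G. Proof. by case: (pt_eltP j). Qed.
Lemma pt_eltE j : pt_elt j o = j. Proof. by case: (pt_eltP j). Qed.

Lemma pt_eltK g : g \in G -> pt_elt (g o) = g.
Proof. by move=> gG; apply: injG; rewrite ?pt_elt_in ?pt_eltE. Qed.

Lemma pt_elt1 : pt_elt o = 1.
Proof. by rewrite -{1}(perm1 o) pt_eltK. Qed.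

Lemma pt_elt_act g j : g \in G -> pt_elt (g j) = pt_elt j * g.
Proof. by move=> gG; rewrite -{1}(pt_eltE j) -permM pt_eltK ?groupM ?pt_elt_in. Qed.

Lemma pt_elt_inj_at p : injective (fun j => pt_elt j p).
Proof.
move=> j1 j2 /= e.
have e12 : pt_elt p * pt_elt j1 = pt_elt p * pt_elt j2.
  by apply: injG; rewrite ?groupM ?pt_elt_in // !permM pt_eltE.
by rewrite -(pt_eltE j1) -(pt_eltE j2) (mulgI _ _ _ e12).
Qed.

(* Under [j <-> pt_elt j], [G] acts by right multiplication (pt_elt_act)
   and [lmul x] is left multiplication by [x^-1], so it centralises [G]. *)
Definition lmul (x : 'S_n) : 'S_n := perm (@pt_elt_inj_at (x^-1 o)).

Lemma lmulE x j : lmul x j = (x^-1 * pt_elt j) o.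
Proof. by rewrite permE permM. Qed.

Lemma lmul_cent x : lmul x \in 'C(G).
Proof.
apply/centP => y yG; apply/permP => j.
by rewrite !permM !lmulE -permM pt_elt_act // mulgA.
Qed.

Lemma lmulM : {in G &, {morph lmul : x y / x * y}}.
Proof.
move=> x y xG yG; apply/permP => j.
by rewrite permM !lmulE pt_eltK ?groupM ?groupV ?pt_elt_in // invMg mulgA.
Qed.

Canonical lmul_morphism := Morphism lmulM.

Lemma injm_lmul : 'injm lmul.
Proof.
apply/injmP => x y xG yG /(congr1 (fun s : 'S_n => s o)).
rewrite !lmulE pt_elt1 !mulg1 => /injG.
by rewrite !groupV => /(_ xG yG)/invg_inj.
Qed.

Lemma atrans_mul_lmul (A B : {group 'S_n}) :
  A * B = G -> [transitive A * lmul @* B, on [set: 'I_n] | 'P].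
Proof.
move=> defG; apply/imsetP; exists o; rewrite ?inE //; apply/setP => j.
rewrite inE; apply/esym/orbitP.
have /mulsgP[x y xA yB exy] : (pt_elt j)^-1 \in A * B.
  by rewrite defG groupV pt_elt_in.
have [/subsetP/(_ x xA) xG /subsetP/(_ y yB) yG] := mulG_sub defG.
exists (x^-1 * lmul y); first by rewrite mem_mulg ?groupV ?mem_morphim.
by rewrite [_ = _]/= apermE permM lmulE pt_eltK ?groupV // -invMg -exy invgK pt_eltE.
Qed.

Lemma exists_cent_atrans_cycle a b :
  <[a]> * <[b]> = G -> coprime #[a] #[b] ->
  exists2 c, c \in 'C(G) & [transitive <[a * c]>, on [set: 'I_n] | 'P].
Proof.
move=> defG coab; exists (lmul b); first exact: lmul_cent.
have [aG bG] := mulG_sub defG; rewrite !cycle_subG in aG bG.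
have cab : commute a (lmul b) := esym (centP (lmul_cent b) a aG).
rewrite cycleM ?order_injm ?injm_lmul // -morphim_cycle //.
exact: atrans_mul_lmul.
Qed.

End RegularAction.

Section AbelianTransitiveCode.

Variables (F : finFieldType) (n : nat) (C : {vspace 'rV[F]_n}).
Variables (K : {group 'S_n}) (o : 'I_n).
Hypotheses (abK : abelian K) (sKP : K \subset PAut C).
Hypothesis trK : [transitive K, on [set: 'I_n] | 'P].

Let injK := atrans_abelian_inj (o := o) abK trK.

Let phi (j : 'I_n) : subg_of K := subg K (pt_elt K o j).

Let psi (u : subg_of K) : 'I_n := sgval u o.

Let phiK : cancel phi psi.
Proof. by move=> j; rewrite /phi /psi subgK ?pt_elt_in ?pt_eltE. Qed.

Let psiK : cancel psi phi.
Proof. by move=> u; rewrite /phi /psi pt_eltK ?subgP ?sgvalK. Qed.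

Let code (f : {ffun subg_of K -> F}) :=
  exists2 v : 'rV[F]_n, v \in C & forall i, f (phi i) = v 0 i.

Lemma code_galg_mul r f : code f -> code (galg_mul r f).
Proof.
case=> v vC fv; exists (\sum_x r x *: permv (sgval x) v)%R.
  by apply: memv_suml => x _; rewrite memvZ // permv_PAut ?(subsetP sKP) ?subgP.
move=> i; rewrite ffunE summxE; apply: eq_bigr => x _.
rewrite -[x^-1 * _]psiK fv !mxE /psi /=.
have xK : (sgval x)^-1 \in K by rewrite groupV subgP.
by rewrite (centsP abK _ xK _ (subgP (phi i))) permM [sgval (phi i) o]phiK.
Qed.

Lemma abelian_atrans_group_code : group_code C (subg_of K).
Proof.
have bij_phi : bijective phi by exists psi.
split; first by rewrite -(bij_eq_card bij_phi) card_ord.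
exists phi; split=> //; apply: abelian_two_sided_ideal.
- by rewrite -(isog_abelian (isog_subg K)).
- by exists 0%R; rewrite ?mem0v // => i; rewrite !ffunE mxE.
- move=> f g [v vC fv] [w wC fw]; exists (v - w)%R; rewrite ?memvB //.
  by move=> i; rewrite !ffunE fv fw !mxE.
- exact: code_galg_mul.
Qed.

End AbelianTransitiveCode.

Lemma cyclic_atrans_code (F : finFieldType) n (C : {vspace 'rV[F]_n})
    (K : {group 'S_n}) :
  cyclic K -> K \subset PAut C -> [transitive K, on [set: 'I_n] | 'P] ->
  cyclic_group_code C.
Proof.
move=> cK sKP trK; have [o _ _] := imsetP trK.
exists (subg_of K); split; first by rewrite -(isog_cyclic (isog_subg K)).
exact: abelian_atrans_group_code (cyclic_abelian cK) sKP trK.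
Qed.

Theorem theorem3p1 (F : finFieldType) (n : nat) (C : {vspace 'rV[F]_n}) :
  (0 < n)%N ->
  (exists G : {group 'S_n},
      [/\ regular_subgroup G, coprime_cyclic_decomposition G &
          (G <*> 'C(G))%g \subset PAut C]) ->
  cyclic_group_code C.
Proof.
move=> n_gt0 [G [regG [A [B [_ /cyclicP[a ->] /cyclicP[b ->] coab defG]]] sGP]].
have [_ trG] := regG; pose o := Ordinal n_gt0.
have injG := regular_subgroup_inj (o := o) regG.
have [c cGc trK] := exists_cent_atrans_cycle trG injG defG coab.
apply: cyclic_atrans_code (cycle_cyclic (a * c)) _ trK.
have [aG _] := mulG_sub defG; rewrite cycle_subG in aG.
by apply: subset_trans sGP; rewrite cycle_subG groupM ?mem_gen ?inE ?aG ?cGc ?orbT.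
Qed.
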